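(* Consider RESIDUE-THROW-DIVISOR. For all $n\in \mathbb{N}$, $\mathcal{SG}(n)=k$ if $$n\in \{3(2^{k-1}-1)+2,\ldots , 3(2^k-1)+1 \}.$$
   Context: RESIDUE-THROW-DIVISOR is the impartial normal-play heap game where a move from a heap $n$ writes $n=kd+r$ with $1\le d<n$, $0\le r<d$, and moves to the single heap $r$ (the remainder; the $k$ copies of $d$ are discarded); heaps of size $0$ and $1$ have no options. $\mathcal{SG}$ denotes the Sprague-Grundy value (mex rule). *)

From mathcomp Require Import all_boot.
Set Implicit Arguments. Unset Strict Implicit. Unset Printing Implicit Defensive.

(* RESIDUE-THROW-DIVISOR: from heap n, choose 1 <= d < n, write n = k d + r
   with 0 <= r < d, and move to heap r = n %% d. *)
Definition rtd_options (n : nat) : seq nat :=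
  [seq n %% d | d <- iota 1 n.-1].

Definition mex (s : seq nat) : nat :=
  find (fun m => m \notin s) (iota 0 (size s).+1).

(* Sprague-Grundy value, computed by recursion with fuel (options are < n) *)
Fixpoint sg_fuel (fuel n : nat) : nat :=
  match fuel with
  | 0 => 0
  | f.+1 => mex [seq sg_fuel f r | r <- rtd_options n]
  end.

Definition SG (n : nat) : nat := sg_fuel n.+1 n.

Example SG_test : [seq SG n | n <- iota 0 12] = [:: 0;0;1;1;1;2;2;2;2;2;2;3].
Proof. by vm_compute. Qed.

(* A heap n >= 2 can be reduced to exactly the heaps r with 2r < n (a
   remainder is smaller than both the divisor and the discarded part, and
   r = n mod (n - r) when r > 0), so SG(n) = mex {SG(r) | 2r < n}.  By strong
   induction, SG(n) > j holds exactly when n + 1 >= 3 * 2^j: the heap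
   3 * 2^i - 1 is the first one of value i + 1, and it is an option of n as
   soon as n + 1 >= 3 * 2^(i+1). *)

From mathcomp Require Import all_boot.
From mathcomp Require Import zify.

Set Implicit Arguments.
Unset Strict Implicit.
Unset Printing Implicit Defensive.

Lemma mex_notin (s : seq nat) : mex s \notin s.
Proof.
have has_notin : has (fun m => m \notin s) (iota 0 (size s).+1).
  apply/negPn/negP => /hasPn iota_sub.
  have := uniq_leq_size (iota_uniq 0 (size s).+1) (fun m im => negbNE (iota_sub m im)).
  by rewrite size_iota ltnn.
have := nth_find 0 has_notin.
by rewrite nth_iota; last by rewrite has_find size_iota in has_notin.
Qed.

Lemma mem_ltn_mex (s : seq nat) i : i < mex s -> i \in s.
Proof.
move=> i_lt; have i_small : i < (size s).+1.
  by apply: leq_trans i_lt _; rewrite -(size_iota 0 (size s).+1) find_size.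
by have := before_find 0 i_lt; rewrite nth_iota // => /negbFE.
Qed.

Lemma sg_fuel_stable f g n : n < f -> n < g -> sg_fuel f n = sg_fuel g n.
Proof.
elim: f g n => [|f IH] [|g] n //= n_lt_f n_lt_g.
congr mex; apply/eq_in_map => r /mapP [d]; rewrite mem_iota => d_range ->.
have r_lt_d : n %% d < d by apply: ltn_pmod; lia.
by apply: IH; lia.
Qed.

Lemma rtd_options_double_lt n r : r \in rtd_options n -> r.*2 < n.
Proof.
case/mapP=> d; rewrite mem_iota => d_range ->.
have r_lt_d : n %% d < d by apply: ltn_pmod; lia.
have q_gt0 : 0 < n %/ d by rewrite divn_gt0; lia.
have := divn_eq n d; nia.
Qed.

Lemma mem_rtd_options n r : 1 < n -> r.*2 < n -> r \in rtd_options n.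
Proof.
move=> n_gt1 r_small; apply/mapP; case: r r_small => [|r] r_small.
  by exists 1; [rewrite mem_iota; lia | rewrite modn1].
exists (n - r.+1); first by rewrite mem_iota; lia.
have r_le_n : r.+1 <= n by lia.
by rewrite -{1}(subnK r_le_n) modnDl modn_small //; lia.
Qed.

Lemma SG_mex n : SG n = mex [seq SG r | r <- rtd_options n].
Proof.
rewrite {1}/SG /=; congr mex; apply/eq_in_map => r /rtd_options_double_lt r_small.
by apply: sg_fuel_stable; lia.
Qed.

Lemma SG_gt n j : (j < SG n) = (3 * 2 ^ j <= n.+1).
Proof.
have pow_gt0 i : 0 < 2 ^ i by rewrite expn_gt0.
elim/ltn_ind: n j => n IH j.
have [n_lt2 | n_ge2] := ltnP n 2.
  have -> : SG n = 0 by case: n n_lt2 IH => [|[|]].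
  by apply/esym/negbTE; have := pow_gt0 j; lia.
rewrite SG_mex; set S := map SG _.
apply/idP/idP.
  case: j => [|i]; first by rewrite expn0; lia.
  case/mem_ltn_mex/mapP=> r /rtd_options_double_lt r_small SG_r.
  have : i < SG r by rewrite -SG_r.
  by rewrite IH ?expnS; lia.
move=> n_large; have mem_S i : i <= j -> i \in S.
  case: i => [|i] i_le_j; apply/mapP.
    exists 0; last by [].
    by apply: mem_rtd_options; lia.
  have := leq_pexp2l (isT : 0 < 2) i_le_j; rewrite expnS => pow_le.
  have pos := pow_gt0 i.
  exists (3 * 2 ^ i).-1; first by apply: mem_rtd_options; lia.
  by apply/esym/eqP; rewrite eqn_leq leqNgt !IH ?expnS; lia.
by rewrite ltnNge; apply/negP => /mem_S; apply/negP/mex_notin.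
Qed.

Theorem mainTheorem12 (n k : nat) :
  1 <= k ->
  3 * (2 ^ k.-1 - 1) + 2 <= n <= 3 * (2 ^ k - 1) + 1 ->
  SG n = k.
Proof.
case: k => [|k] // _ /=; rewrite expnS => n_range.
have pow_gt0 : 0 < 2 ^ k by rewrite expn_gt0.
by apply/eqP; rewrite eqn_leq leqNgt !SG_gt expnS; lia.
Qed.
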